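(* Let $n\ge1$, $m\ge1$ be integers, $q=\exp\bigl(\tfrac{2\pi i}{m+n+1}\bigr)$, and consider $$\partial^{n+1}y+(-1)^n\,(x^m+\lambda^{n+1})\,y=0,\qquad \partial=\tfrac{d}{dx},\ \lambda\in\mathbb{C}.$$ Let $y(x,\lambda)$ be a solution for each $\lambda$ (in the paper: the subdominant solution in the sector $|\arg x|\le\pi/(m+n+1)$), put $y_k(x,\lambda)=q^{nk/2}y(xq^{-k},\lambda q^k)$, and assume $y_k,\dots,y_{k+n}$ are linearly independent for every $k\in\mathbb{Z}$. Let $\Phi_k$ be the matrix with $(i+1,j+1)$ entry $\partial^iy_{k+j}$ ($0\le i,j\le n$), let $S^{(\ell)}_k$ ($\ell\ge1$) be defined by $\Phi_k=\Phi_{k+\ell}S^{(\ell)}_k$, let $S^{(\ell)}(\lambda)$ denote $S^{(\ell)}_0$ as a function of $\lambda$ (so $S^{(\ell)}_k=S^{(\ell)}(\lambda q^k)$) with entries $S^{(\ell)}_{i,j}(\lambda)$, and let $\tau^{(a)}(\lambda)=S^{(1)}_{a,1}(\lambda)$. Define $T^{(1)}_\ell(\lambda)=S^{(\ell)}_{1,1}(\lambda q^{-(\ell-1)/2})$ for $\ell\ge1$, $T^{(1)}_0=1$, $T^{(1)}_\ell=0$ for $\ell<0$, and $T^{(a)}_1(\lambda)=(-1)^{a+1}\tau^{(a)}(\lambda q^{-(a-1)/2})$ for $1\le a\le n+1$. Then for every $1\le a\le n+1$, $$T^{(a)}_1(\lambda)=\det_{1\le i,j\le a}\Bigl(T^{(1)}_{1-i+j}\bigl(\lambda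 q^{(i+j-a-1)/2}\bigr)\Bigr).$$
   Context: Fractional powers $q^{s}$ mean $\exp\bigl(\tfrac{2\pi i s}{m+n+1}\bigr)$. The matrices $S^{(\ell)}_k$ are (generalized) Stokes matrices connecting the fundamental systems of solutions $\Phi_k$ and $\Phi_{k+\ell}$, and $\tau^{(a)}$ are the Stokes multipliers (first column of $S^{(1)}$). *)

From HB Require Import structures.
From mathcomp Require Import all_boot all_order all_algebra.
From mathcomp Require Import all_classical all_reals all_analysis.
From mathcomp Require Import complex.
Set Implicit Arguments. Unset Strict Implicit. Unset Printing Implicit Defensive.
Import Order.TTheory GRing.Theory Num.Theory.
Import numFieldNormedType.Exports.
Local Open Scope ring_scope.
Local Open Scope complex_scope.

Definition Cplx (R : realType) : numFieldType := R[i].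

(* fractional power q^s := exp(2 pi i s / N) with N = m+n+1 *)
Definition qpow (R : realType) (N : nat) (s : R) : Cplx R :=
  (cos (2 * pi * s / N%:R))%:C + 'i * (sin (2 * pi * s / N%:R))%:C.

Definition dern (R : realType) (k : nat) (f : Cplx R -> Cplx R) : Cplx R -> Cplx R :=
  derive1n k f.

Definition is_solution (R : realType) (n m : nat) (y : Cplx R -> Cplx R -> Cplx R) :=
  forall lam : Cplx R,
    (forall k : nat, (k <= n)%N -> forall x : Cplx R,
        derivable (dern k (fun x => y x lam)) x 1) /\
    (forall x : Cplx R,
        dern n.+1 (fun x => y x lam) x
        + (-1) ^+ n * (x ^+ m + lam ^+ n.+1) * y x lam = 0).

Definition yk (R : realType) (n m : nat) (y : Cplx R -> Cplx R -> Cplx R)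
    (k : int) (x lam : Cplx R) : Cplx R :=
  qpow (m + n + 1) ((n%:R * k%:~R) / 2) *
    y (x * qpow (m + n + 1) (- k%:~R)) (lam * qpow (m + n + 1) k%:~R).

Definition lin_indep_yk (R : realType) (n m : nat) (y : Cplx R -> Cplx R -> Cplx R) :=
  forall (k : int) (lam : Cplx R) (c : 'I_n.+1 -> Cplx R),
    (forall x : Cplx R, \sum_(j < n.+1) c j * yk n m y (k + j%:Z) x lam = 0) ->
    forall j, c j = 0.

Definition Phi (R : realType) (n m : nat) (y : Cplx R -> Cplx R -> Cplx R)
    (k : int) (x lam : Cplx R) : 'M[Cplx R]_n.+1 :=
  \matrix_(i < n.+1, j < n.+1) dern i (fun z => yk n m y (k + j%:Z) z lam) x.

Definition is_stokes (R : realType) (n m : nat) (y : Cplx R -> Cplx R -> Cplx R)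
    (S : nat -> Cplx R -> 'M[Cplx R]_n.+1) :=
  forall (l : nat), (0 < l)%N -> forall lam x : Cplx R,
    Phi n m y 0 x lam = Phi n m y l%:Z x lam *m S l lam.

Definition tau (R : realType) (n : nat) (S : nat -> Cplx R -> 'M[Cplx R]_n.+1)
    (a : nat) (lam : Cplx R) : Cplx R :=
  S 1%N lam (inord a.-1) ord0.

Definition T1 (R : realType) (n m : nat) (S : nat -> Cplx R -> 'M[Cplx R]_n.+1)
    (l : int) (lam : Cplx R) : Cplx R :=
  if (0 < l)%R then
    S `|l|%N (lam * qpow (m + n + 1) (- (l - 1)%:~R / 2)) ord0 ord0
  else if l == 0 then 1 else 0.

Definition Ta1 (R : realType) (n m : nat) (S : nat -> Cplx R -> 'M[Cplx R]_n.+1)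
    (a : nat) (lam : Cplx R) : Cplx R :=
  (-1) ^+ a.+1 * tau S a (lam * qpow (m + n + 1) (- (a%:Z - 1)%:~R / 2)).

From HB Require Import structures.
From mathcomp Require Import all_boot all_order all_algebra.
From mathcomp Require Import all_classical all_reals all_analysis.
From mathcomp Require Import complex.
From mathcomp Require Import ring lra zify.
Import Order.TTheory GRing.Theory Num.Theory.
Import numFieldNormedType.Exports.
Local Open Scope ring_scope.

(* Composing the Stokes relations Phi_0 = Phi_l S^(l) and using the independence
   of the y_k gives S^(l+1)(lam) = S^(1)(lam q^l) S^(l)(lam), where S^(1) is a
   companion matrix whose first column holds the Stokes multipliers tau^(b).
   Following the first column of S^(l) along this product shows that the entries
   h_l(lam) = S^(l)_{11}(lam) satisfy the linear recurrence
   sum_{s <= A} c_{A-s}(lam q^s) h_s(lam) = 0  (A >= 1),  c_0 = -1, c_b = tau^(b).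
   Shifted copies of it say that the Hessenberg matrix (h_{1-i+j}(nu q^i))_{ij}
   maps the vector (c_{a-1-k}(nu q^(k+1)))_k, whose last entry is -1, to
   -tau^(a)(nu) e_1; Cramer's rule then gives its determinant
   (-1)^(a+1) tau^(a)(nu).  For nu = lam q^(-(a-1)/2) this is the matrix of the
   theorem, rewritten through T^(1)_l(mu) = h_l(mu q^(-(l-1)/2)). *)

Section HessenbergDeterminant.
Context {R : comRingType} {a : nat}.

Lemma det_id_lastcol (w : 'I_a.+1 -> R) :
  \det (\matrix_(i, j) if j == ord_max then w i else (i == j)%:R) = w ord_max.
Proof.
rewrite -det_tr det_trig; last first.
  apply/is_trig_mxP => i j lt_ij; rewrite !mxE ifF; last first.
    by rewrite -val_eqE /= ltn_eqF // (leq_trans lt_ij) // -ltnS.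
  by rewrite eq_sym -val_eqE /= ltn_eqF.
rewrite big_ord_recr /= big1 ?mul1r => [|i _]; first by rewrite !mxE eqxx.
by rewrite !mxE eqxx ifF // -val_eqE /= ltn_eqF.
Qed.

Lemma det_hessenberg_col_relation (A : 'M[R]_a.+1) (w : 'I_a.+1 -> R) (c : R) :
  (forall i j : 'I_a.+1, (j.+1 < i)%N -> A i j = 0) ->
  (forall i j : 'I_a.+1, i = j.+1 :> nat -> A i j = 1) ->
  w ord_max = -1 ->
  (forall i, \sum_k A i k * w k = (i == ord0)%:R * c) ->
  \det A = (-1) ^+ a.+1 * c.
Proof.
move=> hessA subdiagA wmax Aw.
set W := \matrix_(i, j) if j == ord_max then w i else (i == j)%:R.
have AW : A *m W = \matrix_(i, j) if j == ord_max then (i == ord0)%:R * c else A i j.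
  apply/matrixP => i j; rewrite !mxE; case: eqP => [->|/eqP ne_j].
    by rewrite -Aw; apply: eq_bigr => k _; rewrite mxE eqxx.
  rewrite (bigD1 j) //= big1 ?addr0 => [|k ne_kj]; rewrite mxE (negbTE ne_j).
    by rewrite eqxx mulr1.
  by rewrite (negbTE ne_kj) mulr0.
have : \det (A *m W) = (-1) ^+ a * c.
  rewrite AW (expand_det_col _ ord_max) big_ord_recl big1 ?addr0; last first.
    by move=> i _; rewrite !mxE eqxx -val_eqE /= !mul0r.
  rewrite !mxE !eqxx mul1r /cofactor add0n mulrC -det_tr det_trig; last first.
    apply/is_trig_mxP => i j lt_ij; rewrite !mxE eq_sym (negbTE (neq_lift _ _)).
    by apply: hessA; rewrite /= /bump; move: (ltn_ord i) lt_ij => /=; lia.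
  rewrite big1 ?mulr1 // => i _; rewrite !mxE eq_sym (negbTE (neq_lift _ _)).
  by apply: subdiagA; rewrite /= /bump; move: (ltn_ord i) => /=; lia.
rewrite det_mulmx det_id_lastcol wmax mulrN1 exprS mulN1r mulNr => <-.
by rewrite opprK.
Qed.

End HessenbergDeterminant.

Section QPower.
Context {R : realType} {N : nat}.

Lemma qpowD (s t : R) : qpow N s * qpow N t = qpow N (s + t).
Proof.
rewrite /qpow.
set u := 2 * pi * s / N%:R; set v := 2 * pi * t / N%:R.
have -> : 2 * pi * (s + t) / N%:R = u + v by rewrite mulrDr mulrDl.
rewrite cosD sinD.
by apply/eqP; rewrite eq_complex /=; apply/andP; split; apply/eqP; ring.
Qed.

Lemma qpow0 : qpow N (0 : R) = 1.
Proof.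
rewrite /qpow mulr0 mul0r cos0 sin0.
by apply/eqP; rewrite eq_complex /=; apply/andP; split; apply/eqP; ring.
Qed.

Lemma mulr_qpow (z : Cplx R) (s t : R) : z * qpow N s * qpow N t = z * qpow N (s + t).
Proof. by rewrite -mulrA qpowD. Qed.

End QPower.

Section StokesMatrices.
Context {R : realType} {n m : nat} {y : Cplx R -> Cplx R -> Cplx R}.
Context {S : nat -> Cplx R -> 'M[Cplx R]_n.+1}.
Hypothesis stokesS : @is_stokes R n m y S.
Hypothesis yk_free : lin_indep_yk n m y.

Local Notation q := (qpow (R := R) (m + n + 1)).
Local Notation yk := (yk n m y).

Lemma yk_addl (k j : int) (x lam : Cplx R) :
  yk (k + j) x lam = q (n%:R * k%:~R / 2) * yk j (x * q (- k%:~R)) (lam * q k%:~R).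
Proof.
rewrite /yk mulrA qpowD !mulr_qpow intrD.
by congr (q _ * y (_ * q _) (_ * q _)); ring.
Qed.

Lemma yk_stokes {l : nat} (l_gt0 : (0 < l)%N) (lam x : Cplx R) (j : 'I_n.+1) :
  yk j x lam = \sum_(i < n.+1) S l lam i j * yk (l%:Z + i%:Z) x lam.
Proof.
have := congr1 (fun M : 'M[Cplx R]_n.+1 => M ord0 j) (stokesS _ l_gt0 lam x).
rewrite /= /Phi !mxE /= add0r => ->.
by apply: eq_bigr => i _; rewrite !mxE mulrC.
Qed.

Lemma yk_stokes_shift (k : int) {l : nat} (l_gt0 : (0 < l)%N)
    (lam x : Cplx R) (j : 'I_n.+1) :
  yk (k + j%:Z) x lam =
  \sum_(i < n.+1) S l (lam * q k%:~R) i j * yk (k + l%:Z + i%:Z) x lam.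
Proof.
rewrite yk_addl (yk_stokes l_gt0) mulr_sumr; apply: eq_bigr => i _.
by rewrite -addrA (yk_addl k) mulrCA.
Qed.

Lemma yk_coef_inj (k : int) (lam : Cplx R) (u v : 'I_n.+1 -> Cplx R) :
  (forall x, \sum_(j < n.+1) u j * yk (k + j%:Z) x lam =
             \sum_(j < n.+1) v j * yk (k + j%:Z) x lam) ->
  u =1 v.
Proof.
move=> eq_uv j; apply/eqP; rewrite -subr_eq0; apply/eqP.
apply: (yk_free k lam (fun j => u j - v j)) => x.
by under eq_bigr do rewrite mulrBl; rewrite sumrB eq_uv subrr.
Qed.

Definition stokesmx (l : nat) (mu : Cplx R) : 'M[Cplx R]_n.+1 :=
  if l is 0 then 1%:M else S l mu.

Lemma yk_stokesmx l (mu x : Cplx R) (j : 'I_n.+1) :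
  yk j x mu = \sum_(i < n.+1) stokesmx l mu i j * yk (l%:Z + i%:Z) x mu.
Proof.
case: l => [|l]; last exact: yk_stokes.
rewrite (bigD1 j) //= big1 ?addr0 => [|i ne_ij]; first by rewrite mxE eqxx mul1r.
by rewrite mxE (negbTE ne_ij) mul0r.
Qed.

Lemma stokesmxS l (mu : Cplx R) :
  stokesmx l.+1 mu = S 1 (mu * q l%:~R) *m stokesmx l mu.
Proof.
apply/matrixP => i j; move: i; apply: (@yk_coef_inj l.+1 mu) => x.
rewrite -yk_stokesmx (yk_stokesmx l).
under [RHS]eq_bigr do rewrite mxE mulr_suml.
rewrite exchange_big /=; apply: eq_bigr => i _.
rewrite (yk_stokes_shift l (isT : (0 < 1)%N)) mulr_sumr.
by apply: eq_bigr => i' _; rewrite -[l.+1]addn1 PoszD mulrCA mulrA.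
Qed.

Lemma stokes1_companion (mu : Cplx R) (i j : 'I_n.+1) :
  (0 < j)%N -> S 1 mu i j = (i.+1 == j)%:R.
Proof.
move=> j_gt0; move: i; apply: (@yk_coef_inj 1 mu) => x.
rewrite -(yk_stokes (isT : (0 < 1)%N)).
have lt_j1 : (j.-1 < n.+1)%N by rewrite (leq_ltn_trans (leq_pred j)).
rewrite (bigD1 (Ordinal lt_j1)) //= big1 ?addr0 => [|i ne_i].
  by rewrite prednK // eqxx mul1r -PoszD add1n prednK.
case: eqP => [ij|]; last by rewrite mul0r.
by case/eqP: ne_i; apply/val_inj; rewrite /= -ij.
Qed.

Definition stokes00 (l : int) (mu : Cplx R) : Cplx R :=
  if l is Posz k then stokesmx k mu ord0 ord0 else 0.

Lemma stokes00_lt0 (l : int) (mu : Cplx R) : l < 0 -> stokes00 l mu = 0.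
Proof. by case: l. Qed.

Lemma stokes00_0 (mu : Cplx R) : stokes00 0 mu = 1.
Proof. by rewrite /= mxE. Qed.

Lemma T1_stokes00 (l : int) (mu : Cplx R) :
  @T1 R n m S l mu = stokes00 l (mu * q (- (l - 1)%:~R / 2)).
Proof. by rewrite /T1; case: l => [[|k]|k] //=; rewrite mxE. Qed.

(* [tau S b] is junk for [b > n.+1] ([inord] falls back to [ord0]), hence the cut-off. *)
Definition rec_coef (b : nat) (mu : Cplx R) : Cplx R :=
  if b is 0 then -1 else if (b <= n.+1)%N then tau S b mu else 0.

Definition stokes_col0 (l : nat) (mu : Cplx R) (i : nat) : Cplx R :=
  if (i < n.+1)%N then stokesmx l mu (inord i) ord0 else 0.

Lemma stokes_col0S l (mu : Cplx R) i :
  stokes_col0 l.+1 mu i =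
  rec_coef i.+1 (mu * q l%:~R) * stokes00 l mu + stokes_col0 l mu i.+1.
Proof.
rewrite /stokes_col0 stokesmxS /=; case: ltnP => [lt_in|le_ni]; last first.
  by rewrite mul0r add0r ltnNge ltnS (ltnW le_ni).
rewrite mxE big_ord_recl /tau /=; congr (_ + _).
under eq_bigr do rewrite stokes1_companion // inordK // eqSS.
case: ltnP => [lt_in'|le_ni].
  rewrite (bigD1 (Ordinal (lt_in' : (i < n)%N))) //= eqxx mul1r.
  rewrite big1 ?addr0 => [|k ne_k].
    by congr (stokesmx _ _ _ _); apply/val_inj; rewrite /= inordK.
  suff /negbTE -> : i != k by rewrite mul0r.
  by apply: contra ne_k => /eqP ik; apply/eqP/val_inj.
rewrite ltnS in le_ni.
by rewrite big1 // => k _; rewrite gtn_eqF ?mul0r // (leq_trans (ltn_ord k) le_ni).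
Qed.

Lemma stokes_col0E l (mu : Cplx R) i :
  stokes_col0 l mu i =
  \sum_(s < l) rec_coef (i + l - s) (mu * q s%:~R) * stokes00 s mu
  + (i + l == 0)%N%:R.
Proof.
elim: l i => [|l IHl] i.
  rewrite big_ord0 add0r addn0 /stokes_col0; case: ltnP => [lt_in|]; last by case: i.
  by rewrite mxE -val_eqE /= inordK.
by rewrite stokes_col0S IHl big_ord_recr /= -(addSnnS i l) (addnK l i.+1) addrCA addrA.
Qed.

Lemma stokes00_recurrence A (mu : Cplx R) : (0 < A)%N ->
  \sum_(0 <= s < A.+1) rec_coef (A - s) (mu * q s%:~R) * stokes00 s mu = 0.
Proof.
move=> A_gt0; rewrite big_mkord big_ord_recr /= subnn mulN1r.
have := stokes_col0E A mu 0; rewrite /stokes_col0 /= add0n eqn0Ngt A_gt0 addr0.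
have -> : inord 0 = ord0 :> 'I_n.+1 by apply/val_inj; rewrite /= inordK.
by move=> <-; rewrite subrr.
Qed.

Lemma stokes00_shifted_recurrence A (nu : Cplx R) i : (i < A)%N ->
  \sum_(0 <= k < A.+1)
    stokes00 (k%:Z - i%:Z) (nu * q i%:~R) * rec_coef (A - k) (nu * q k%:~R) = 0.
Proof.
move=> lt_iA; have Ai_gt0 : (0 < A - i)%N by rewrite subn_gt0.
rewrite -[in RHS](stokes00_recurrence _ (nu * q i%:~R) Ai_gt0).
rewrite (big_cat_nat (leq0n i) (leq_trans (ltnW lt_iA) (leqnSn A))) /=.
rewrite big_nat_cond big1 ?add0r => [|k /andP[/andP[_ lt_ki] _]]; last first.
  by rewrite stokes00_lt0 ?mul0r // subr_lt0 ltz_nat.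
rewrite -{1}(add0n i) big_addn subSn ?(ltnW lt_iA) //.
apply: eq_bigr => k _.
rewrite PoszD addrK mulrC mulr_qpow -subnDA [(k + i)%N]addnC.
by rewrite intrD addrC.
Qed.

Lemma stokes00_col_relation a (nu : Cplx R) i : (a < n.+1)%N -> (i <= a)%N ->
  \sum_(k < a.+1)
    stokes00 (1 - i%:Z + k%:Z) (nu * q i%:~R) * rec_coef (a - k) (nu * q k.+1%:~R)
  = (i == 0)%N%:R * - tau S a.+1 nu.
Proof.
move=> lt_an le_ia; have := stokes00_shifted_recurrence a.+1 nu i le_ia.
rewrite big_mkord big_ord_recl /= subn0 qpow0 mulr1 lt_an addrC.
move=> /eqP; rewrite addr_eq0 => /eqP sum_eq.
transitivity (- (stokes00 (0 - i%:Z) (nu * q i%:~R) * tau S a.+1 nu)).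
  rewrite -sum_eq; apply: eq_bigr => k _; rewrite /bump /= add1n subSS.
  by congr (stokes00 _ _ * _); lia.
case: i {le_ia sum_eq} => [|i]; first by rewrite subrr stokes00_0 !mul1r.
by rewrite stokes00_lt0 ?mul0r ?oppr0 // sub0r oppr_lt0.
Qed.

Lemma det_stokes00 a (nu : Cplx R) : (a < n.+1)%N ->
  \det (\matrix_(i < a.+1, j < a.+1) stokes00 (1 - i%:Z + j%:Z) (nu * q i%:~R))
  = (-1) ^+ a * tau S a.+1 nu.
Proof.
move=> lt_an.
rewrite (det_hessenberg_col_relation _
           (fun k : 'I_a.+1 => rec_coef (a - k) (nu * q k.+1%:~R)) (- tau S a.+1 nu)).
- by rewrite exprS mulN1r mulrNN.
- by move=> i j lt_ji; rewrite mxE stokes00_lt0 //; lia.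
- by move=> i j ij; rewrite mxE (_ : 1 - i%:Z + j%:Z = 0) ?stokes00_0 //; lia.
- by rewrite /= subnn.
- move=> i; rewrite -val_eqE -(stokes00_col_relation _ nu _ lt_an (ltn_ord i)).
  by apply: eq_bigr => k _; rewrite mxE.
Qed.

End StokesMatrices.

Theorem mainTheorem3 (R : realType) (n m : nat)
    (y : Cplx R -> Cplx R -> Cplx R)
    (S : nat -> Cplx R -> 'M[Cplx R]_n.+1) :
  (1 <= n)%N -> (1 <= m)%N ->
  @is_solution R n m y ->
  @lin_indep_yk R n m y ->
  @is_stokes R n m y S ->
  forall (a : nat), (1 <= a <= n.+1)%N ->
  forall lam : Cplx R,
    @Ta1 R n m S a lam =
    \det (\matrix_(i < a, j < a)
            @T1 R n m S (1 - i%:Z + j%:Z)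
               (lam * qpow (m + n + 1)
                  ((i.+1%:Z + j.+1%:Z - a%:Z - 1)%:~R / 2))).
Proof.
move=> _ _ _ yk_free stokesS [|a] // /andP[_ lt_an] lam.
rewrite /Ta1 !exprS !mulN1r opprK -(det_stokes00 stokesS yk_free _ _ lt_an).
congr (\det _); apply/matrixP => i j; rewrite !mxE T1_stokes00 !mulr_qpow.
congr (stokes00 _ (lam * qpow _ _)).
move: (i : nat) (j : nat) => {}i {}j.
rewrite -[i.+1]addn1 -[j.+1]addn1 -[a.+1]addn1 !PoszD !(intrD, intrB, intrN).
lra.
Qed.
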